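(* Let $H \subset L$ be a commutative field extension, let $\alpha \in L$ and set $M = H(\alpha)$. Then, for all positive integers $r,s \le \dim_H M$, we have $\mu_{H,M}(r,s) \le r+s-1$.
   Context: For $H$-subspaces $A,B$ of $M$, $\langle AB\rangle$ denotes the $H$-subspace of $M$ spanned by the product set $AB=\{ab \mid a\in A, b\in B\}$. For positive integers $r,s \le \dim_H M$, $\mu_{H,M}(r,s)$ is the minimum of $\dim_H \langle AB\rangle$ over all $H$-subspaces $A,B$ of $M$ with $\dim_H A = r$ and $\dim_H B = s$. *)

From mathcomp Require Import all_boot all_order all_algebra.
Set Implicit Arguments. Unset Strict Implicit. Unset Printing Implicit Defensive.
Import GRing.Theory.
Local Open Scope ring_scope.

Definition is_subfield (L : fieldType) (H : L -> Prop) : Prop :=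
  H 1 /\ (forall x y, H x -> H y -> H (x - y)) /\
  (forall x y, H x -> H y -> H (x * y)) /\ (forall x, H x -> H x^-1).

Definition genfield (L : fieldType) (H : L -> Prop) (alpha : L) : L -> Prop :=
  fun x => forall K : L -> Prop, is_subfield K ->
    (forall y, H y -> K y) -> K alpha -> K x.

Definition Hfree (L : fieldType) (H : L -> Prop) (n : nat) (v : 'I_n -> L) : Prop :=
  forall c : 'I_n -> L, (forall i, H (c i)) ->
    \sum_(i < n) c i * v i = 0 -> forall i, c i = 0.

Definition Hspan (L : fieldType) (H : L -> Prop) (S : L -> Prop) : L -> Prop :=
  fun x => exists n (c u : 'I_n -> L),
    (forall i, H (c i) /\ S (u i)) /\ x = \sum_(i < n) c i * u i.

Definition Hsubspace (L : fieldType) (H : L -> Prop) (A : L -> Prop) : Prop :=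
  A 0 /\ (forall x y, A x -> A y -> A (x + y)) /\
  (forall c x, H c -> A x -> A (c * x)).

Definition Hdim_eq (L : fieldType) (H : L -> Prop) (A : L -> Prop) (n : nat) : Prop :=
  exists v : 'I_n -> L, Hfree H v /\
    forall x, A x <-> Hspan H (fun y => exists i, y = v i) x.

(* r <= dim_H M (dim_H M possibly infinite): M contains r H-independent elements. *)
Definition Hdim_ge (L : fieldType) (H : L -> Prop) (M : L -> Prop) (r : nat) : Prop :=
  exists v : 'I_r -> L, (forall i, M (v i)) /\ Hfree H v.

Definition prodset (L : fieldType) (A B : L -> Prop) : L -> Prop :=
  fun x => exists a b, A a /\ B b /\ x = a * b.

(* n is one of the values dim_H <AB> over all H-subspaces A, B of M with
   dim_H A = r, dim_H B = s; mu_{H,M}(r,s) is the minimum of these values. *)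
Definition mu_value (L : fieldType) (H M : L -> Prop) (r s n : nat) : Prop :=
  exists A B : L -> Prop,
    Hsubspace H A /\ (forall x, A x -> M x) /\ Hdim_eq H A r /\
    Hsubspace H B /\ (forall x, B x -> M x) /\ Hdim_eq H B s /\
    Hdim_eq H (Hspan H (prodset A B)) n.

From mathcomp Require Import all_boot all_order all_algebra zify.
From Stdlib Require Import Classical FunctionalExtensionality.
Set Implicit Arguments. Unset Strict Implicit. Unset Printing Implicit Defensive.
Import GRing.Theory.
Local Open Scope ring_scope.

(* Take A and B to be the H-spans of 1, a, ..., a^(r-1) and of 1, ..., a^(s-1);
   then <AB> is the span of 1, ..., a^(r+s-2), of dimension at most r+s-1.
   A and B have the right dimensions because 1, ..., a^(k-1) are H-free
   whenever dim_H H(a) >= k: otherwise a^m is a combination of the lower powers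
   for some m < k, so the span of 1, ..., a^(m-1) is a subfield containing H and
   a, hence all of H(a), which would then have dimension at most m. *)

Section Subfield.
Variables (L : fieldType) (K : L -> Prop).
Hypothesis subK : is_subfield K.

Lemma subfield1 : K 1.
Proof. by case: subK. Qed.

Lemma subfieldB x y : K x -> K y -> K (x - y).
Proof. by case: subK => _ [KB _]; apply: KB. Qed.

Lemma subfieldM x y : K x -> K y -> K (x * y).
Proof. by case: subK => _ [_ [KM _]]; apply: KM. Qed.

Lemma subfieldV x : K x -> K x^-1.
Proof. by case: subK => _ [_ [_ KV]]; apply: KV. Qed.

Lemma subfield0 : K 0.
Proof. by rewrite -(subrr 1); apply: subfieldB; apply: subfield1. Qed.

Lemma subfieldN x : K x -> K (- x).
Proof. by move=> Kx; rewrite -sub0r; apply: subfieldB => //; apply: subfield0. Qed.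

Lemma subfieldD x y : K x -> K y -> K (x + y).
Proof. by move=> Kx Ky; rewrite -(opprK y); apply: subfieldB => //; apply: subfieldN. Qed.

Lemma subfieldX x k : K x -> K (x ^+ k).
Proof.
move=> Kx; elim: k => [|k IHk]; first by rewrite expr0; apply: subfield1.
by rewrite exprS; apply: subfieldM.
Qed.

Lemma subfield_sum n (F : 'I_n -> L) : (forall i, K (F i)) -> K (\sum_(i < n) F i).
Proof. by move=> KF; apply: (big_ind K) => //; [apply: subfield0 | apply: subfieldD]. Qed.

Lemma subfield_Hsubspace (H : L -> Prop) : (forall y, H y -> K y) -> Hsubspace H K.
Proof.
move=> HK; split; first exact: subfield0.
split=> [x y|c x Hc Kx]; first exact: subfieldD.
by apply: subfieldM => //; apply: HK.
Qed.

End Subfield.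

Section Genfield.
Variables (L : fieldType) (H : L -> Prop) (a : L).

Lemma genfield_subfield : is_subfield (genfield H a).
Proof.
split; first by move=> K [].
split; first by move=> x y Fx Fy K subK HK Ka; apply: (subfieldB subK); [apply: Fx | apply: Fy].
split; first by move=> x y Fx Fy K subK HK Ka; apply: (subfieldM subK); [apply: Fx | apply: Fy].
by move=> x Fx K subK HK Ka; apply: (subfieldV subK); apply: Fx.
Qed.

Lemma genfield_base y : H y -> genfield H a y.
Proof. by move=> Hy K _ HK _; apply: HK. Qed.

Lemma genfield_gen : genfield H a a.
Proof. by move=> K _ _ Ka. Qed.

Lemma genfield_Hsubspace : Hsubspace H (genfield H a).
Proof. by apply: subfield_Hsubspace; [apply: genfield_subfield | apply: genfield_base]. Qed.

End Genfield.

Lemma Hsubspace_sum (L : fieldType) (H A : L -> Prop) n (F : 'I_n -> L) :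
  Hsubspace H A -> (forall i, A (F i)) -> A (\sum_(i < n) F i).
Proof. by case=> A0 [AD _] AF; apply: (big_ind A). Qed.

Lemma Hspan_min (L : fieldType) (H S A : L -> Prop) x :
  Hsubspace H A -> (forall y, S y -> A y) -> Hspan H S x -> A x.
Proof.
move=> subA SA [n [c [u [cu ->]]]]; apply: (Hsubspace_sum subA) => i.
by case: (cu i) => Hc Su; case: subA => _ [_ AZ]; apply: AZ => //; apply: SA.
Qed.

Section Combinations.
Variables (L : fieldType) (H : L -> Prop).
Hypothesis subH : is_subfield H.

Definition Hcomb n (u : 'I_n -> L) (x : L) :=
  exists c : 'I_n -> L, (forall i, H (c i)) /\ x = \sum_(i < n) c i * u i.

Lemma Hcomb_subspace n (u : 'I_n -> L) : Hsubspace H (Hcomb u).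
Proof.
split; first exists (fun=> 0).
  by split=> [_|]; [apply: subfield0 | rewrite big1 // => i _; rewrite mul0r].
split=> [x y [c [Hc ->]] [d [Hd ->]] | k x Hk [c [Hc ->]]].
  exists (fun i => c i + d i); split=> [i|]; first exact: subfieldD.
  by rewrite -big_split; apply: eq_bigr => i _; rewrite mulrDl.
exists (fun i => k * c i); split=> [i|]; first exact: subfieldM.
by rewrite mulr_sumr; apply: eq_bigr => i _; rewrite mulrA.
Qed.

Lemma HcombZ n (u : 'I_n -> L) c x : H c -> Hcomb u x -> Hcomb u (c * x).
Proof. by case: (Hcomb_subspace u) => _ [_ uZ]; apply: uZ. Qed.

Lemma Hcomb_elt n (u : 'I_n -> L) i : Hcomb u (u i).
Proof.
exists (fun j => (j == i)%:R); split=> [j|].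
  by case: (j == i); [apply: subfield1 | apply: subfield0].
rewrite (bigD1 i) //= eqxx mul1r big1 ?addr0 // => j /negbTE ->; exact: mul0r.
Qed.

Lemma Hspan_rangeE n (u : 'I_n -> L) x :
  Hspan H (fun y => exists i, y = u i) x <-> Hcomb u x.
Proof.
split; first by apply: Hspan_min; [apply: Hcomb_subspace | move=> y [i ->]; apply: Hcomb_elt].
by case=> c [Hc ->]; exists n, c, u; split=> // i; split=> //; exists i.
Qed.

Lemma homogeneous_system_nontrivial d m (C : 'I_m -> 'I_d -> L) :
  (forall i j, H (C i j)) -> (d < m)%N ->
  exists x : 'I_m -> L, (forall i, H (x i)) /\ (exists i, x i != 0) /\
    forall j, \sum_(i < m) x i * C i j = 0.
Proof.
elim: d m C => [|d IHd] m C HC ltdm.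
  exists (fun=> 1); split=> [_|]; first exact: subfield1.
  by split=> [|[]//]; exists (Ordinal ltdm); rewrite oner_eq0.
have [col0|] := classic (forall i, C i ord_max = 0).
  have [x [Hx [nz0 sol]]] :=
    IHd m (fun i j => C i (lift ord_max j)) (fun _ _ => HC _ _) (ltnW ltdm).
  exists x; split=> //; split=> // j; case: (unliftP ord_max j) => [j' ->|->]; first exact: sol.
  by rewrite big1 // => i _; rewrite col0 mulr0.
case/not_all_ex_not; case: m C HC ltdm => [|m] C HC ltdm i0 a_neq0; first by case: i0 a_neq0.
set a := C i0 ord_max in a_neq0.
(* Gaussian elimination of unknown i0 using the pivot a of the last equation. *)
pose C' k j :=
  C (lift i0 k) (lift ord_max j) - C (lift i0 k) ord_max / a * C i0 (lift ord_max j).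
have HC' k j : H (C' k j).
  apply: (subfieldB subH (HC _ _)); apply: (subfieldM subH) (HC _ _).
  exact: (subfieldM subH (HC _ _) (subfieldV subH (HC _ _))).
have [y [Hy [[k0 yk0] sol]]] := IHd m C' HC' ltdm.
pose S := \sum_(k < m) y k * C (lift i0 k) ord_max.
pose x i := if unlift i0 i is Some k then y k else - (S / a).
have x_lift k : x (lift i0 k) = y k by rewrite /x liftK.
have x_i0 : x i0 = - (S / a) by rewrite /x unlift_none.
exists x; split.
  move=> i; rewrite /x; case: unlift => [k|] //.
  apply: (subfieldN subH); apply: (subfieldM subH); last exact: (subfieldV subH (HC _ _)).
  by apply: (subfield_sum subH) => k; apply: (subfieldM subH).
split; first by exists (lift i0 k0); rewrite x_lift.
move=> j; rewrite (bigD1_ord i0) //= x_i0.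
under eq_bigr => k _ do rewrite x_lift.
case: (unliftP ord_max j) => [j' ->|->]; last by rewrite mulNr divfK ?addNr //; apply/eqP.
have := sol j'; rewrite /C' /=; under eq_bigr => k _ do rewrite mulrBr.
rewrite sumrB => /eqP; rewrite subr_eq0 => /eqP ->.
apply/eqP; rewrite mulNr addrC subr_eq0 /S !mulr_suml; apply/eqP/eq_bigr => k _.
by rewrite !mulrA.
Qed.

Lemma Hfree_Hcomb_leq d k (u : 'I_d -> L) (v : 'I_k -> L) :
  Hfree H v -> (forall i, Hcomb u (v i)) -> (k <= d)%N.
Proof.
move=> freev uv; rewrite leqNgt; apply/negP => ltdk.
have [C HC] := fin_all_exists uv.
have [x [Hx [[i0 xi0] sol]]] :=
  homogeneous_system_nontrivial (fun i j => (proj1 (HC i)) j) ltdk.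
suff sum0 : \sum_(i < k) x i * v i = 0 by rewrite (freev x Hx sum0 i0) eqxx in xi0.
under eq_bigr => i _ do rewrite (proj2 (HC i)) mulr_sumr.
rewrite exchange_big big1 // => j _.
by under eq_bigr => i _ do rewrite mulrA; rewrite -mulr_suml sol mul0r.
Qed.

Definition rconsf n (v : 'I_n -> L) (y : L) (i : 'I_n.+1) : L :=
  if unlift ord_max i is Some j then v j else y.

Lemma rconsf_widen n (v : 'I_n -> L) y j : rconsf v y (widen_ord (leqnSn n) j) = v j.
Proof.
have -> : widen_ord (leqnSn n) j = lift ord_max j.
  by apply: val_inj; rewrite /= /bump leqNgt ltn_ord.
by rewrite /rconsf liftK.
Qed.

Lemma rconsf_max n (v : 'I_n -> L) y : rconsf v y ord_max = y.
Proof. by rewrite /rconsf unlift_none. Qed.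

Lemma Hfree_rconsf_Hcomb n (v : 'I_n -> L) y :
  Hfree H v -> ~ Hfree H (rconsf v y) -> Hcomb v y.
Proof.
move=> freev notfree.
have [c [Hc [rel [i0 ci0]]]] : exists c : 'I_n.+1 -> L, (forall i, H (c i)) /\
    \sum_(i < n.+1) c i * rconsf v y i = 0 /\ exists i, c i <> 0.
  apply: NNPP => nodep; apply: notfree => c Hc rel i; apply: NNPP => ci.
  by apply: nodep; exists c; split=> //; split=> //; exists i.
move: rel; rewrite big_ord_recr /= rconsf_max.
under eq_bigr => j _ do rewrite rconsf_widen.
set a := c ord_max => rel.
have a_neq0 : a != 0.
  apply/eqP => a0; move: rel; rewrite a0 mul0r addr0 => rel; apply: ci0.
  case: (unliftP ord_max i0) => [j ->|->] //.
  rewrite -(freev _ (fun j => Hc _) rel j); congr c.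
  by apply: val_inj; rewrite /= /bump leqNgt ltn_ord.
exists (fun j => - (c (widen_ord (leqnSn n) j) / a)); split.
  by move=> j; apply/(subfieldN subH)/(subfieldM subH (Hc _))/(subfieldV subH (Hc _)).
apply: (mulfI a_neq0); rewrite mulr_sumr.
move/eqP: rel; rewrite addrC addr_eq0 => /eqP ->.
by rewrite -sumrN; apply: eq_bigr => j _; rewrite mulNr mulrN mulrA (mulrC a) divfK.
Qed.

Lemma Hcomb_Hdim N (u : 'I_N -> L) : exists n, (n <= N)%N /\ Hdim_eq H (Hcomb u) n.
Proof.
pose indep n := exists v : 'I_n -> L, (forall i, Hcomb u (v i)) /\ Hfree H v.
have indep_leq n : indep n -> (n <= N)%N by case=> v [uv freev]; apply: Hfree_Hcomb_leq uv.
have [n [[v [uv freev]] maxn]] : exists n, indep n /\ ~ indep n.+1.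
  apply: NNPP => nomax; suff /indep_leq : indep N.+1 by rewrite ltnn.
  elim: N.+1 => [|n IHn]; first by exists (fun=> 0); split=> [[]|c _ _ []].
  by apply: NNPP => notn; apply: nomax; exists n.
exists n; split; first by apply: indep_leq; exists v.
exists v; split=> // x; split=> [ux|]; last first.
  by apply: Hspan_min; [apply: Hcomb_subspace | move=> y [i ->]].
apply/Hspan_rangeE/Hfree_rconsf_Hcomb => // freevx; apply: maxn.
by exists (rconsf v x); split=> // i; rewrite /rconsf; case: unlift.
Qed.

End Combinations.

Definition powers (L : fieldType) (a : L) n (i : 'I_n) : L := a ^+ i.
Arguments powers {L} a n.

Lemma powersS (L : fieldType) (a : L) m : powers a m.+1 = rconsf (powers a m) (a ^+ m).
Proof.
apply: functional_extensionality => i; rewrite /rconsf.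
by case: (unliftP ord_max i) => [j ->|->] //; rewrite /powers /= /bump leqNgt ltn_ord.
Qed.

Section PowersSpan.
Variables (L : fieldType) (H : L -> Prop) (a : L) (m : nat).
Hypothesis subH : is_subfield H.
Hypothesis free_powers : Hfree H (powers a m).
Hypothesis dep_powers : Hcomb H (powers a m) (a ^+ m).

Local Notation P := (Hcomb H (powers a m)).

Lemma Hcomb_powers_mulX x : P x -> P (a * x).
Proof.
case=> c [Hc ->]; rewrite mulr_sumr; apply: (Hsubspace_sum (Hcomb_subspace subH _)) => i.
rewrite mulrCA; apply: (HcombZ subH) => //; rewrite /powers -exprS.
case: (ltnP i.+1 m) => lt_im; first exact: (Hcomb_elt subH _ (Ordinal lt_im)).
by rewrite (_ : i.+1 = m) //; apply/eqP; rewrite eqn_leq lt_im ltn_ord.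
Qed.

Lemma Hcomb_powers_mulXn k x : P x -> P (a ^+ k * x).
Proof.
by move=> Px; elim: k => [|k IHk]; rewrite ?mul1r // exprS -mulrA; apply: Hcomb_powers_mulX.
Qed.

Lemma Hcomb_powers1 : P 1.
Proof.
case: m free_powers dep_powers => [|m'] _.
  by case=> c [_]; rewrite big_ord0 expr0 => /eqP; rewrite oner_eq0.
by have := Hcomb_elt subH (powers a m'.+1) ord0; rewrite /powers expr0.
Qed.

Lemma Hcomb_powersM x y : P x -> P y -> P (x * y).
Proof.
move=> Px [d [Hd ->]]; rewrite mulr_sumr; apply: (Hsubspace_sum (Hcomb_subspace subH _)) => j.
by rewrite mulrCA; apply: (HcombZ subH) => //; rewrite mulrC; apply: Hcomb_powers_mulXn.
Qed.

Lemma Hcomb_powersV x : P x -> P x^-1.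
Proof.
move=> Px; have [->|x_neq0] := eqVneq x 0.
  by rewrite invr0 -(mul0r 1); apply: (HcombZ subH) (subfield0 subH) Hcomb_powers1.
(* x, x a, ..., x a^(m-1) are m free vectors in the m-dimensional P,
   so 1 is a combination of them. *)
pose w (i : 'I_m) := x * a ^+ i.
have free_w : Hfree H w.
  move=> c Hc; under eq_bigr => i _ do rewrite mulrCA.
  by rewrite -mulr_sumr => /eqP; rewrite mulf_eq0 (negbTE x_neq0) => /eqP; apply: free_powers.
have notfree_w1 : ~ Hfree H (rconsf w 1).
  move=> free_w1; suff : (m.+1 <= m)%N by rewrite ltnn.
  apply: (Hfree_Hcomb_leq subH (u := powers a m) free_w1) => i.
  rewrite /rconsf; case: unlift => [j|]; last exact: Hcomb_powers1.
  by apply: Hcomb_powersM => //; apply: (Hcomb_elt subH).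
have [c [Hc one_eq]] := Hfree_rconsf_Hcomb subH free_w notfree_w1.
exists c; split=> //; rewrite -[LHS]mulr1 one_eq /w.
by under eq_bigr => i _ do rewrite mulrCA; rewrite -mulr_sumr mulKf.
Qed.

Lemma Hcomb_powers_subfield : is_subfield P.
Proof.
split; first exact: Hcomb_powers1.
split; last by split; [apply: Hcomb_powersM | apply: Hcomb_powersV].
move=> x y Px Py; case: (Hcomb_subspace subH (powers a m)) => _ [PD _]; apply: PD => //.
by rewrite -mulN1r; apply: (HcombZ subH) => //; apply/(subfieldN subH)/(subfield1 subH).
Qed.

Lemma genfield_sub_Hcomb_powers x : genfield H a x -> P x.
Proof.
apply; first exact: Hcomb_powers_subfield.
  by move=> y Hy; rewrite -[y]mulr1; apply: (HcombZ subH) Hy Hcomb_powers1.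
by have := Hcomb_powers_mulX Hcomb_powers1; rewrite mulr1.
Qed.

End PowersSpan.

Lemma Hfree_powers (L : fieldType) (H : L -> Prop) (a : L) r :
  is_subfield H -> Hdim_ge H (genfield H a) r -> Hfree H (powers a r).
Proof.
move=> subH [v [Fv freev]]; suff: forall k, (k <= r)%N -> Hfree H (powers a k) by apply.
elim=> [|k IHk] lt_kr; first by move=> c _ _ [].
have free_k := IHk (ltnW lt_kr); apply: NNPP; rewrite powersS => notfree.
have dep := Hfree_rconsf_Hcomb subH free_k notfree.
suff : (r <= k)%N by rewrite leqNgt lt_kr.
apply: (Hfree_Hcomb_leq subH freev) => i.
exact: (genfield_sub_Hcomb_powers subH free_k dep (Fv i)).
Qed.

Lemma Hdim_Hcomb_powers (L : fieldType) (H : L -> Prop) (a : L) k :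
  is_subfield H -> Hdim_ge H (genfield H a) k -> Hdim_eq H (Hcomb H (powers a k)) k.
Proof.
move=> subH dimk; exists (powers a k); split; first exact: Hfree_powers.
by move=> x; rewrite Hspan_rangeE.
Qed.

Lemma Hcomb_powers_genfield (L : fieldType) (H : L -> Prop) (a : L) k x :
  Hcomb H (powers a k) x -> genfield H a x.
Proof.
case=> c [Hc ->]; apply: (Hsubspace_sum (genfield_Hsubspace H a)) => i.
case: (genfield_Hsubspace H a) => _ [_ FZ]; apply: FZ => //.
rewrite /powers; exact: (subfieldX (genfield_subfield H a) i (@genfield_gen _ H a)).
Qed.

Lemma Hspan_prod_powers (L : fieldType) (H : L -> Prop) (a : L) r s x :
  is_subfield H -> (0 < r)%N -> (0 < s)%N ->
  Hspan H (prodset (Hcomb H (powers a r)) (Hcomb H (powers a s))) x <->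
  Hcomb H (powers a (r + s - 1)) x.
Proof.
move=> subH r_gt0 s_gt0; set N := (r + s - 1)%N; split.
  apply: Hspan_min; first exact: Hcomb_subspace.
  move=> y [_ [_ [[c [Hc ->]] [[d [Hd ->]] ->]]]].
  rewrite mulr_suml; apply: (Hsubspace_sum (Hcomb_subspace subH _)) => i.
  rewrite mulr_sumr; apply: (Hsubspace_sum (Hcomb_subspace subH _)) => j.
  rewrite /powers mulrACA -exprD; apply: (HcombZ subH); first exact: (subfieldM subH).
  have lt_ijN : (i + j < N)%N by have := ltn_ord i; have := ltn_ord j; rewrite /N; lia.
  exact: (Hcomb_elt subH _ (Ordinal lt_ijN)).
(* split each exponent k < r + s - 1 as k = i + j with i < r and j < s *)
case=> c [Hc ->]; pose i (k : 'I_N) := minn k (r - 1).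
exists N, c, (fun k => a ^+ i k * a ^+ (k - i k)); split.
  move=> k; split=> //; exists (a ^+ i k), (a ^+ (k - i k)).
  have lt_ir : (i k < r)%N by rewrite /i; lia.
  have lt_js : (k - i k < s)%N by have := ltn_ord k; rewrite /i /N; lia.
  split; first exact: (Hcomb_elt subH _ (Ordinal lt_ir)).
  by split=> //; exact: (Hcomb_elt subH _ (Ordinal lt_js)).
by apply: eq_bigr => k _; rewrite -exprD subnKC // geq_minl.
Qed.

Theorem lemma4p1 (L : fieldType) (H : L -> Prop) (alpha : L) (r s : nat) :
  is_subfield H ->
  (0 < r)%N -> (0 < s)%N ->
  Hdim_ge H (genfield H alpha) r -> Hdim_ge H (genfield H alpha) s ->
  exists n, mu_value H (genfield H alpha) r s n /\ (n <= r + s - 1)%N.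
Proof.
move=> subH r_gt0 s_gt0 dimr dims.
have [n [le_nN [v [freev spanv]]]] := Hcomb_Hdim subH (powers alpha (r + s - 1)).
exists n; split=> //.
exists (Hcomb H (powers alpha r)), (Hcomb H (powers alpha s)).
split; first exact: Hcomb_subspace.
split; first exact: Hcomb_powers_genfield.
split; first exact: Hdim_Hcomb_powers.
split; first exact: Hcomb_subspace.
split; first exact: Hcomb_powers_genfield.
split; first exact: Hdim_Hcomb_powers.
by exists v; split=> // x; rewrite Hspan_prod_powers.
Qed.
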